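(* $$\lim_{p\downarrow0}\ \limsup_{n\to\infty}\frac{H_n(p)}{n}=0\quad\text{a.s.}$$
   Context: Bernoulli hail graph $\mathcal G(p)$, $p\in(0,1]$: nodes are pairs $(i,n)$, $i\in\mathbb Z$, $n\in\{1,2,\dots\}$. First define $\mathcal G(1)$: for each $n$ and $i$, independently, there is either an edge $(i,n)\to(i+1,n)$ or an edge $(i+1,n)\to(i,n)$, each with probability $1/2$ (spatial edges); for all $i$ and $n\ge2$ there are edges $(i,n)\to(i-1,n-1)$, $(i,n)\to(i,n-1)$, $(i,n)\to(i+1,n-1)$ (time edges). $\mathcal G(p)$ is obtained by coloring each node black with probability $p$ and white with probability $1-p$, independently of everything else; for each white node, its outgoing spatial edges are deleted and its time edges to $(i\pm1,n-1)$ are deleted (only $(i,n)\to(i,n-1)$ is kept). The graphs for different $p$ are naturally coupled (e.g. via uniform variables for the colors) so that $\mathcal G(p)\subseteq\mathcal G(q)$ for $p\le q$. A path is a sequence of nodes joined by directed edges present in $\mathcal G(p)$. The height of a black node is $1$, of a white node $0$; the height of a path is the sum of heights of its nodes. $H^i_n=H^i_n(p)$ is the maximal height of all paths of $\mathcal G(p)$ starting from $(i,n)$; its law does not depend on $i$ and we write $H_n=H_n(p)$. *)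

From HB Require Import structures.
From mathcomp Require Import all_boot all_order all_algebra.
From mathcomp Require Import all_classical all_reals all_analysis.
Set Implicit Arguments. Unset Strict Implicit. Unset Printing Implicit Defensive.
Import Order.TTheory GRing.Theory Num.Theory.
Local Open Scope classical_set_scope.
Local Open Scope ring_scope.

(* Nodes of the hail graph: (i, n) with i : int, n >= 1 (a node with n = 0
   is never used: edges only relate nodes at levels >= 1). *)
Definition node := (int * nat)%type.

Section Hail.
Variables (R : realType) (T : Type).
(* Randomness:  D v w = true  means the spatial edge (i,n) -> (i+1,n) is
   present (otherwise (i+1,n) -> (i,n));  U v w is the uniform variable
   coupling the colours: node v is black in G(p) iff U v w <= p. *)
Variables (D : node -> T -> bool) (U : node -> T -> R).

Definition black (p : R) (w : T) (v : node) : bool := U v w <= p.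

Definition hail_edge (p : R) (w : T) (a b : node) : bool :=
  let: (i, n) := a in let: (j, m) := b in
  [&& (0 < n)%N, m == n, black p w a &
     ((j == i + 1) && D (i, n) w) || ((i == j + 1) && ~~ D (j, n) w)]
  ||
  [&& (1 < n)%N, m == n.-1 &
     (j == i) || (black p w a && ((j == i + 1) || (j == i - 1)))].

Definition path_height (p : R) (w : T) (x : node) (s : seq node) : nat :=
  count (black p w) (x :: s).

Definition Hmax (p : R) (w : T) (i : int) (n : nat) : \bar R :=
  ereal_sup [set ((path_height p w (i, n) s)%:R)%:E
            | s in [set s | path (hail_edge p w) (i, n) s]].

(* H_n(p) / n, using H_n = H^0_n. *)
Definition Hratio (p : R) (w : T) (n : nat) : \bar R :=
  (Hmax p w 0 n * (n%:R^-1)%:E)%E.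
End Hail.

(* Joint law of the randomness: for every finite set F of nodes, booleans b
   and Borel sets A, the events {D v = b v, U v \in A v} (v in F) have
   probability prod_{v in F} (1/2) * Leb(A v `&` [0,1]); i.e. all D v, U v
   are mutually independent, D v ~ Bernoulli(1/2), U v ~ Uniform[0,1]. *)
Definition hail_law (R : realType) (d : measure_display) (T : measurableType d)
  (P : probability T R) (D : node -> T -> bool) (U : node -> T -> R) : Prop :=
  (forall v, measurable [set w | D v w]) /\
  (forall v, measurable_fun setT (U v)) /\
  (forall (F : seq node) (b : node -> bool) (A : node -> set R),
     uniq F -> (forall v, measurable (A v)) ->
     P [set w | forall v, v \in F -> D v w = b v /\ A v (U v w)] =
     (\prod_(v <- F) ((2^-1)%:E * (@lebesgue_measure R) (A v `&` `[0%R, 1%R])))%E).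

(* A path of G(p) never visits a node twice: levels never increase, and along
   a level the orientation of the spatial edges forbids turning back.  Between
   two consecutive nodes that are black in G(p0), p0 >= p, the path makes one
   step (column change at most 1, level not increasing) and then only
   descends vertically, since white nodes only have the vertical time edge.
   Hence H_n(p) >= k forces a "cone chain" of k distinct nodes from (0, n),
   all black in G(p0).  There are at most 3^k 2^(n+k) cone chains and each is
   black with probability p0^k, so for k = n/(q+1) + 1 and p0 = 1/(3 8^(q+1))
   the failure probabilities are summable in n.  By Borel-Cantelli, almost
   surely H_n(p) <= n/(q+1) for all large n and all p <= p0, i.e. the limsup
   of H_n(p)/n is at most 1/(q+1) on (0, p0]. *)

From HB Require Import structures.
From mathcomp Require Import all_boot all_order all_algebra.
From mathcomp Require Import all_classical all_reals all_analysis.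
From mathcomp Require Import zify.
Set Implicit Arguments. Unset Strict Implicit. Unset Printing Implicit Defensive.
Import Order.TTheory GRing.Theory Num.Theory.
Local Open Scope classical_set_scope.
Local Open Scope ring_scope.

Lemma sumr_const_seq (V : nmodType) (I : Type) (r : seq I) (x : V) :
  \sum_(i <- r) x = x *+ size r.
Proof. by rewrite big_const_seq count_predT -Monoid.iteropE. Qed.

Lemma prodr_const_seq (S : semiRingType) (I : Type) (r : seq I) (x : S) :
  \prod_(i <- r) x = x ^+ size r.
Proof. by rewrite big_const_seq count_predT -Monoid.iteropE. Qed.

Lemma lebesgue_measure_Iic_itv01 (R : realType) (p0 : R) : 0 <= p0 <= 1 ->
  (@lebesgue_measure R) (`]-oo, p0]%classic `&` `[0%R, 1%R]) = p0%:E.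
Proof.
move=> /andP[p0_ge0 p0_le1].
rewrite (_ : _ `&` _ = `[0%R, p0]%classic).
  rewrite lebesgue_measure_itv /= lte_fin oppr0 adde0.
  case: ifPn => //; rewrite -leNgt => p0_le0.
  by congr EFin; apply/esym/le_anti; rewrite p0_le0 p0_ge0.
apply/seteqP; split => x /=; rewrite !in_itv /= ?andbT.
  by move=> [-> /andP[-> _]].
by move=> /andP[-> x_le]; rewrite x_le (le_trans x_le p0_le1).
Qed.

Section MeasureFiniteUnions.
Variables (d : measure_display) (T : measurableType d) (R : realType).

Lemma measurable_forall_mem (I : choiceType) (r : seq I) (A : I -> set T) :
  (forall i, measurable (A i)) -> measurable [set x | forall i, i \in r -> A i x].
Proof.
by move=> mA; have := bigsetI_measurable r (fun i (_ : true) => mA i); rewrite -bigcap_seq.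
Qed.

Lemma le_measure_bigsetU (mu : {measure set T -> \bar R}) (I : Type) (r : seq I)
    (P : pred I) (F : I -> set T) : (forall i, P i -> measurable (F i)) ->
  (mu (\big[setU/set0]_(i <- r | P i) F i) <= \sum_(i <- r | P i) mu (F i))%E.
Proof.
move=> mF; suff [] : measurable (\big[setU/set0]_(i <- r | P i) F i) /\
    (mu (\big[setU/set0]_(i <- r | P i) F i) <= \sum_(i <- r | P i) mu (F i))%E by [].
apply: (big_ind2 (fun A s => measurable A /\ (mu A <= s)%E)) => [|A a B b [mA lA] [mB lB]|i Pi].
- by rewrite measure0.
- by split; [exact: measurableU|exact: le_trans (measureU2 _ mA mB) (leeD lA lB)].
- by split; [exact: mF|].
Qed.

End MeasureFiniteUnions.

Lemma not_lim_sup_set (T : Type) (F : (set T)^nat) (w : T) :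
  ~ lim_sup_set F w -> \forall n \near \oo, ~ F n w.
Proof.
move=> Fw; apply: contrapT => notev; apply: Fw => M _.
apply: contrapT => notFM; apply: notev; exists M => // n Mn Fn.
by apply: notFM; exists n.
Qed.

Lemma limn_esup_ge0 (R : realType) (u : (\bar R)^nat) :
  (forall n, (0 <= u n)%E) -> (0 <= limn_esup u)%E.
Proof.
move=> u_ge0; rewrite limn_esup_lim; apply: lime_ge; first exact: is_cvg_esups.
by apply: nearW => m; apply: le_ereal_sup_tmp; exists (u m) => //; exists m => /=.
Qed.

Lemma limn_esup_le (R : realType) (u : (\bar R)^nat) (l : \bar R) :
  (\forall n \near \oo, (u n <= l)%E) -> (limn_esup u <= l)%E.
Proof.
move=> [M _ uM]; rewrite limn_esup_lim; apply: lime_le; first exact: is_cvg_esups.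
near=> m; apply/ereal_supP => _ [k /= mk <-]; apply: uM.
by apply: leq_trans mk; near: m; exists M.
Unshelve. all: by end_near.
Qed.

Lemma cvg_at_right0_squeeze (R : realType) (f : R -> \bar R) :
  (forall q : nat, \forall x \near 0^'+, (0 <= f x)%E /\ (f x <= (q.+1%:R^-1)%:E)%E) ->
  f x @[x --> 0^'+] --> 0%E.
Proof.
move=> bounds; have f_fin : \forall x \near 0^'+, f x \is a fin_num.
  by apply: filterS (bounds 0%N) => x [f_ge0 f_le]; rewrite ge0_fin_numE // (le_lt_trans f_le) ?ltry.
apply: cvg_EFin (f_fin) _; apply/cvgrPdist_le => e e_gt0.
have q_le : (Num.truncn e^-1).+1%:R^-1 <= e.
  by rewrite -[leRHS](invrK e) lef_pV2 ?posrE ?invr_gt0 ?ltr0n // ltW // truncnS_gt.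
apply: filterS2 (bounds (Num.truncn e^-1)) f_fin => x [f_ge0 f_le] fx_fin.
move: f_ge0 f_le; rewrite -(fineK fx_fin) !lee_fin => f_ge0 f_le.
by rewrite /= sub0r normrN ger0_norm // (le_trans f_le).
Qed.

Fixpoint bool_seqs (k : nat) : seq (seq bool) :=
  if k is k'.+1 then [seq b :: s | b <- [:: true; false], s <- bool_seqs k']
  else [:: [::]].

Lemma size_bool_seqs k : size (bool_seqs k) = (2 ^ k)%N.
Proof.
by elim: k => // k IH; cbn [bool_seqs]; rewrite size_allpairs IH expnS.
Qed.

Lemma mem_bool_seqs s : s \in bool_seqs (size s).
Proof.
by elim: s => [|b s IH] //; cbn [bool_seqs size]; apply/allpairsP; exists (b, s); case: b.
Qed.

Definition steps : seq int := [:: -1; 0; 1].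

Definition cone (a b : node) : bool := (b.2 <= a.2)%N && (b.1 - a.1 \in steps).

Lemma cone_refl : reflexive cone.
Proof. by move=> a; rewrite /cone leqnn subrr !inE orbT. Qed.

Section HailPaths.
Variables (R : realType) (T : Type) (D : node -> T -> bool) (U : node -> T -> R).
Variables (p : R) (w : T).
Local Notation edge := (hail_edge D U p w).

Lemma hail_edge_cone a b : edge a b -> cone a b.
Proof.
case: a b => i n [j m]; rewrite /hail_edge /cone /= !inE.
case/orP => [/and4P[_ /eqP -> _ /orP[/andP[/eqP -> _]|/andP[/eqP -> _]]]|
  /and3P[_ /eqP -> /orP[/eqP ->|/andP[_ /orP[/eqP ->|/eqP ->]]]]]; lia.
Qed.

Lemma hail_edge_white a b : ~~ black U p w a -> edge a b -> b = (a.1, a.2.-1).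
Proof.
case: a b => i n [j m] /= /negbTE white; rewrite /hail_edge.
case/orP => [/and4P[_ _ bl _]|/and3P[_ /eqP -> /orP[/eqP -> //|/andP[bl _]]]];
  by rewrite bl in white.
Qed.

Lemma hail_edge_level i n b : edge (i, n) b -> b.2 = n ->
  (b = (i + 1, n) /\ D (i, n) w) \/ (b = (i - 1, n) /\ ~~ D (i - 1, n) w).
Proof.
case: b => j m /= + Em; subst m; rewrite /hail_edge.
case/orP => [/and4P[_ _ _ /orP[/andP[/eqP -> ->]|/andP[/eqP Ei Dj]]]|/and3P[n_gt1 /eqP n_eq _]].
- by left.
- by right; rewrite Ei addrK in Dj *.
- lia.
Qed.

Lemma hail_path_level x s : path edge x s -> {in s, forall z, (z.2 <= x.2)%N}.
Proof.
elim: s x => [//|y s IH] x /andP[/hail_edge_cone/andP[yx _] py] z.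
rewrite in_cons => /predU1P[-> //|zs].
exact: leq_trans (IH _ py _ zs) yx.
Qed.

(* Along level n the edge between columns i and i+1 can only be crossed in the
   direction prescribed by D (i, n), so a path never comes back across it. *)
Lemma hail_path_right s i n : D (i, n) w -> path edge (i + 1, n) s ->
  {in s, forall z, z.2 = n -> i < z.1}.
Proof.
elim: s i => [//|y s IH] i Di /andP[exy py] z zys zn.
have /andP[yn _] := hail_edge_cone exy.
have [ylt|yeq] : (y.2 < n)%N \/ y.2 = n by move: yn => /=; lia.
  move: zys; rewrite in_cons => /predU1P[zy|zs]; first by move: ylt; rewrite -zy zn ltnn.
  by move: ylt; rewrite ltnNge -zn (hail_path_level py zs).
case: (hail_edge_level exy yeq) => [[Ey Dy]|[_]]; last by rewrite addrK Di.
subst y; move: zys; rewrite in_cons => /predU1P[-> /=|zs]; first lia.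
by have := IH _ Dy py z zs zn; lia.
Qed.

Lemma hail_path_left s i n : ~~ D (i, n) w -> path edge (i, n) s ->
  {in s, forall z, z.2 = n -> z.1 < i + 1}.
Proof.
elim: s i => [//|y s IH] i Di /andP[exy py] z zys zn.
have /andP[yn _] := hail_edge_cone exy.
have [ylt|yeq] : (y.2 < n)%N \/ y.2 = n by move: yn => /=; lia.
  move: zys; rewrite in_cons => /predU1P[zy|zs]; first by move: ylt; rewrite -zy zn ltnn.
  by move: ylt; rewrite ltnNge -zn (hail_path_level py zs).
case: (hail_edge_level exy yeq) => [[_ Dy]|[Ey Dy]]; first by rewrite Dy in Di.
subst y; move: zys; rewrite in_cons => /predU1P[-> /=|zs]; first lia.
by have := IH _ Dy py z zs zn; lia.
Qed.

Lemma hail_edge_irrefl a : ~~ edge a a.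
Proof.
case: a => i n; rewrite /hail_edge; apply/negP.
by case/orP => [/and4P[_ _ _ /orP[/andP[/eqP]|/andP[/eqP]]]|/and3P[n_gt1 /eqP]] /=; lia.
Qed.

Lemma hail_path_notin x s : path edge x s -> x \notin s.
Proof.
case: s => [//|y s] /andP[exy py]; case: x exy => i n exy.
rewrite in_cons negb_or; apply/andP; split.
  by apply: contraTneq exy => <-; exact: hail_edge_irrefl.
have /andP[yn _] := hail_edge_cone exy.
have [ylt|yeq] : (y.2 < n)%N \/ y.2 = n by move: yn => /=; lia.
  by apply/negP => /(hail_path_level py) /=; lia.
case: (hail_edge_level exy yeq) => [[Ey Dy]|[Ey Dy]]; subst y.
  by apply/negP => /(hail_path_right Dy py)/(_ erefl) /=; lia.
by apply/negP => /(hail_path_left Dy py)/(_ erefl) /=; lia.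
Qed.

Lemma hail_path_uniq x s : path edge x s -> uniq (x :: s).
Proof.
elim: s x => [//|y s IH] x ps.
by rewrite cons_uniq hail_path_notin //; case/andP: ps => _ /IH.
Qed.

End HailPaths.

Definition cone_seq (a : node) : seq node :=
  [seq (a.1 + d, m) | m <- iota 0 a.2.+1, d <- steps].

Lemma mem_cone_seq a b : (b \in cone_seq a) = cone a b.
Proof.
rewrite /cone; apply/allpairsPdep/andP => [[m [d [mi ds ->]]]|[ba ds]].
  by rewrite mem_iota in mi; split => /=; [lia|rewrite addrC addKr].
exists b.2, (b.1 - a.1); rewrite mem_iota ltnS ba ds addrC subrK.
by case: b {ba ds}.
Qed.

Fixpoint cone_chains (k : nat) (a : node) : seq (seq node) :=
  if k is k'.+1 then [seq b :: c | b <- cone_seq a, c <- cone_chains k' b]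
  else [:: [::]].

Lemma mem_cone_chains k a c :
  (c \in cone_chains k a) = (size c == k) && path cone a c.
Proof.
elim: k a c => [|k IH] a [|b c] //; cbn [cone_chains size path].
  by apply/negbTE/negP => /allpairsPdep[? [? []]].
rewrite eqSS andbCA -IH -mem_cone_seq.
by apply/allpairsPdep/andP => [[b' [c' [? ? [-> ->]]]]|[? ?]]; [|exists b, c].
Qed.

Lemma sum_expn2_lt n : (\sum_(m <- iota 0 n) 2 ^ m < 2 ^ n)%N.
Proof.
rewrite -[n in iota _ n]subn0 -/(index_iota 0 n).
elim: n => [|n IH]; first by rewrite big_geq.
by rewrite big_nat_recr //= expnS; lia.
Qed.

Lemma size_cone_chains k a : (size (cone_chains k a) <= 3 ^ k * 2 ^ (a.2 + k))%N.
Proof.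
elim: k a => [|k IH] a; cbn [cone_chains]; first by rewrite expn0 mul1n expn_gt0.
rewrite size_allpairs_dep sumnE big_map.
apply: (@leq_trans (\sum_(b <- cone_seq a) 3 ^ k * 2 ^ (b.2 + k))%N); first exact: leq_sum.
rewrite big_allpairs_dep.
rewrite (eq_bigr (fun m => 3 ^ k.+1 * 2 ^ k * 2 ^ m)%N) => [|m _]; last first.
  by rewrite /steps !big_cons big_nil /= expnS expnD; nia.
rewrite -big_distrr [X in (X <= _)%N]/= addnS !expnS expnD.
apply: leq_trans (leq_mul (leqnn _) (ltnW (sum_expn2_lt a.2.+1))) _.
by rewrite expnS; move: (3 ^ k)%N (2 ^ k)%N (2 ^ a.2)%N => x y z; nia.
Qed.

Section BlackChains.
Variables (R : realType) (T : Type) (D : node -> T -> bool) (U : node -> T -> R).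
Variables (p p0 : R) (w : T).
Hypothesis le_pp0 : p <= p0.
Local Notation edge := (hail_edge D U p w).
Local Notation black0 := (black U p0 w).

Lemma black_le v : black U p w v -> black0 v.
Proof. by move/le_trans; apply. Qed.

(* A node that is white in G(p0) is white in G(p), so a path only descends
   vertically between two consecutive p0-black nodes. *)
Lemma hail_path_filter_black x' x s : cone x' x -> path edge x s ->
  path cone x' (seq.filter black0 (x :: s)).
Proof.
elim: s x' x => [|y s IH] x' x cx; first by rewrite /=; case: ifP; rewrite /= ?cx.
move=> /andP[exy py].
have -> : seq.filter black0 (x :: y :: s) =
  if black0 x then x :: seq.filter black0 (y :: s) else seq.filter black0 (y :: s) by [].
case: ifP => bx; first by apply/andP; split; last exact: IH (hail_edge_cone exy) py.
have wx : ~~ black U p w x by apply: contraFN bx; exact: black_le.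
apply: IH py; rewrite (hail_edge_white wx exy).
by move: cx; rewrite /cone /= => /andP[/(leq_trans (leq_pred _)) -> ->].
Qed.

Lemma hail_path_black_chain x s k : path edge x s ->
  (k <= count (black U p w) (x :: s))%N ->
  exists2 c, c \in cone_chains k x & uniq c && all black0 c.
Proof.
move=> ps hk; exists (take k (seq.filter black0 (x :: s))).
  rewrite mem_cone_chains size_takel; last first.
    by rewrite size_filter (leq_trans hk) // sub_count //; exact: black_le.
  by rewrite eqxx take_path // hail_path_filter_black ?cone_refl.
apply/andP; split; first by rewrite take_uniq ?filter_uniq ?(hail_path_uniq ps).
by apply/allP => v /mem_take; rewrite mem_filter => /andP[].
Qed.

End BlackChains.

Section HailEvents.
Variables (R : realType) (d : measure_display) (T : measurableType d).
Variables (D : node -> T -> bool) (U : node -> T -> R).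
Hypothesis measurable_D : forall v, measurable [set w | D v w].
Hypothesis measurable_U : forall v, measurable_fun setT (U v).

Definition coloured_event (p0 : R) (c : seq node) (b : node -> bool) : set T :=
  [set w | forall v, v \in c -> D v w = b v /\ `]-oo, p0]%classic (U v w)].

Definition all_black_event (p0 : R) (c : seq node) : set T :=
  [set w | all (black U p0 w) c].

Definition black_chain_event (p0 : R) (n k : nat) : set T :=
  \big[setU/set0]_(c <- cone_chains k (0, n) | uniq c) all_black_event p0 c.

Lemma measurable_U_le v (p0 : R) : measurable [set w | `]-oo, p0]%classic (U v w)].
Proof. by rewrite -[X in measurable X]setTI; exact: measurable_U (measurable_itv _). Qed.

Lemma measurable_coloured_event p0 c b : measurable (coloured_event p0 c b).
Proof.
suff mDU v : measurable ([set w | D v w = b v] `&` [set w | `]-oo, p0]%classic (U v w)]).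
  exact: measurable_forall_mem c _ mDU.
apply: measurableI (measurable_U_le v p0).
case: (b v); first exact: measurable_D.
rewrite (_ : [set w | D v w = false] = ~` [set w | D v w]); first exact/measurableC.
by apply/seteqP; split => w /=; case: (D v w).
Qed.

Lemma measurable_all_black_event p0 c : measurable (all_black_event p0 c).
Proof.
rewrite (_ : all_black_event p0 c = [set w | forall v, v \in c -> `]-oo, p0]%classic (U v w)]).
  by apply: measurable_forall_mem => v; exact: measurable_U_le.
apply/seteqP; split => w /=.
  by move/allP => + v vc => /(_ v vc); rewrite /black /= in_itv.
by move=> H; apply/allP => v /H; rewrite /black /= in_itv.
Qed.

Lemma measurable_black_chain_event p0 n k : measurable (black_chain_event p0 n k).
Proof. by apply: bigsetU_measurable => c _; exact: measurable_all_black_event. Qed.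

Definition pattern (c : seq node) (s : seq bool) (v : node) : bool :=
  nth false s (index v c).

(* [hail_law] only describes events fixing every direction bit, so we split
   according to the 2^(size c) possible orientations on c. *)
Lemma all_black_event_sub p0 c : all_black_event p0 c `<=`
  \big[setU/set0]_(s <- bool_seqs (size c)) coloured_event p0 c (pattern c s).
Proof.
move=> w /allP c_black; rewrite -bigcup_seq.
exists [seq D v w | v <- c]; first by rewrite /= -[in X in _ \in X](size_map (D^~ w)) mem_bool_seqs.
move=> v vc; split; first by rewrite /pattern (nth_map v) ?index_mem ?nth_index.
by move: (c_black v vc); rewrite /black /= in_itv.
Qed.

Lemma hail_path_black_chain_event (p p0 : R) w n s k : p <= p0 ->
  path (hail_edge D U p w) (0%:Z, n) s ->
  (k <= path_height U p w (0%:Z, n) s)%N -> black_chain_event p0 n k w.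
Proof.
move=> le_pp0 ps hk; have [c cC /andP[uc c_black]] := hail_path_black_chain le_pp0 ps hk.
by rewrite /black_chain_event -bigcup_seq_cond; exists c => //=; rewrite cC.
Qed.

End HailEvents.

Section HailProbability.
Variables (R : realType) (d : measure_display) (T : measurableType d).
Variables (P : probability T R) (D : node -> T -> bool) (U : node -> T -> R).
Hypothesis hail : hail_law P D U.

Lemma probability_coloured_event p0 c b : 0 <= p0 <= 1 -> uniq c ->
  P (coloured_event D U p0 c b) = ((p0 / 2) ^+ size c)%:E.
Proof.
move=> p0_01 uc; have [_ [_ law]] := hail.
rewrite /coloured_event (law c b (fun=> `]-oo, p0]%classic) uc) //.
under eq_bigr do rewrite lebesgue_measure_Iic_itv01 // -EFinM mulrC.
by rewrite prodEFin prodr_const_seq.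
Qed.

Lemma probability_all_black_event p0 c : 0 <= p0 <= 1 -> uniq c ->
  (P (all_black_event U p0 c) <= (p0 ^+ size c)%:E)%E.
Proof.
move=> p0_01 uc; have [mD [mU _]] := hail.
pose patterns := \big[setU/set0]_(s <- bool_seqs (size c))
  coloured_event D U p0 c (pattern c s).
apply: (@le_trans _ _ (P patterns)).
  apply: le_measure; rewrite ?inE; last exact: all_black_event_sub.
    exact: measurable_all_black_event.
  by apply: bigsetU_measurable => s _; exact: measurable_coloured_event.
apply: le_trans.
  by apply: le_measure_bigsetU => s _; exact: measurable_coloured_event.
rewrite (eq_bigr (fun=> ((p0 / 2) ^+ size c)%:E)) => [|s _]; last first.
  exact: probability_coloured_event.
rewrite sumEFin sumr_const_seq size_bool_seqs lee_fin.
by rewrite -[X in X <= _]mulr_natr natrX -exprMn mulfVK.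
Qed.

Lemma probability_black_chain_event p0 n k : 0 <= p0 <= 1 ->
  (P (black_chain_event U p0 n k) <= ((3 ^ k * 2 ^ (n + k))%N%:R * p0 ^+ k)%:E)%E.
Proof.
move=> p0_01; have [_ [mU _]] := hail.
apply: le_trans.
  by apply: le_measure_bigsetU => c _; exact: measurable_all_black_event.
apply: (@le_trans _ _ (\sum_(c <- cone_chains k (0%:Z, n)) (p0 ^+ k)%:E)%E).
  rewrite big_mkcond !big_seq; apply: lee_sum => c cC; case: ifP => uc.
    by move: cC; rewrite mem_cone_chains => /andP[/eqP <- _]; exact: probability_all_black_event.
  by rewrite lee_fin exprn_ge0 //; case/andP: p0_01.
rewrite sumEFin sumr_const_seq lee_fin -[X in X <= _]mulr_natl.
by apply: ler_wpM2r; rewrite ?ler_nat ?size_cone_chains ?exprn_ge0 //; case/andP: p0_01.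
Qed.

End HailProbability.

Definition chain_length (q n : nat) : nat := (n %/ q.+1).+1.

Definition threshold (R : realType) (q : nat) : R := (3 * 8 ^ q.+1)%N%:R^-1.

Lemma threshold_gt0 (R : realType) q : 0 < threshold R q.
Proof. by rewrite invr_gt0 ltr0n muln_gt0 expn_gt0. Qed.

Lemma threshold_le1 (R : realType) q : threshold R q <= 1.
Proof. by rewrite invf_le1 ?ler1n ?ltr0n muln_gt0 expn_gt0. Qed.

Lemma chain_count_threshold q n (k := chain_length q n) :
  (3 ^ k * 2 ^ (n + k) * 2 ^ n.+1 <= (3 * 8 ^ q.+1) ^ k)%N.
Proof.
have n_lt : (n < q.+1 * k)%N.
  by rewrite /k /chain_length {1}(divn_eq n q.+1); have := ltn_pmod n (ltn0Sn q); lia.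
rewrite expnMn -expnM (_ : 8 = 2 ^ 3)%N // -expnM -!mulnA leq_mul2l -!expnD.
by rewrite leq_pexp2l ?orbT //; lia.
Qed.

Lemma chain_count_threshold_real (R : realType) q n (k := chain_length q n) :
  (3 ^ k * 2 ^ (n + k))%N%:R * threshold R q ^+ k <= 1 / (2 ^ n.+1)%N%:R.
Proof.
rewrite /threshold exprVn -natrX mul1r ler_pdivrMr ?ltr0n ?expn_gt0 ?muln_gt0 ?expn_gt0 //.
by rewrite mulrC ler_pdivlMr ?ltr0n ?expn_gt0 // -natrM ler_nat chain_count_threshold.
Qed.

Section HailBounds.
Variables (R : realType) (d : measure_display) (T : measurableType d).
Variables (D : node -> T -> bool) (U : node -> T -> R).

Definition rare_event (q n : nat) : set T :=
  black_chain_event U (threshold R q) n (chain_length q n).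

Lemma Hmax_ge0 p w n : (0 <= Hmax D U p w 0 n)%E.
Proof.
by apply: le_ereal_sup_tmp; exists (path_height U p w (0, n) [::])%:R%:E => //; exists [::].
Qed.

Lemma Hratio_ge0 p w n : (0 <= Hratio D U p w n)%E.
Proof. by apply: mule_ge0; [exact: Hmax_ge0|rewrite lee_fin invr_ge0]. Qed.

Lemma Hmax_le p p0 w n k : p <= p0 -> ~ black_chain_event U p0 n k.+1 w ->
  (Hmax D U p w 0 n <= k%:R%:E)%E.
Proof.
move=> le_pp0 no_chain; apply/ereal_supP => _ [s ps <-].
rewrite lee_fin ler_nat leqNgt; apply/negP => hk.
exact/no_chain/(hail_path_black_chain_event le_pp0 ps hk).
Qed.

Lemma Hratio_le q p w n : p <= threshold R q -> ~ rare_event q n w -> (0 < n)%N ->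
  (Hratio D U p w n <= (q.+1%:R^-1)%:E)%E.
Proof.
move=> le_p no_chain n_gt0.
apply: le_trans (lee_wpmul2r _ (Hmax_le le_p no_chain)) _; first by rewrite lee_fin invr_ge0.
rewrite -EFinM lee_fin -[_ * _^-1]/(_ / _) ler_pdivrMr ?ltr0n //.
by rewrite mulrC ler_pdivlMr ?ltr0n // -natrM ler_nat leq_divM.
Qed.

Lemma limn_esup_Hratio_bounds q p w : p <= threshold R q ->
  (\forall n \near \oo, ~ rare_event q n w) ->
  (0 <= limn_esup (Hratio D U p w))%E /\ (limn_esup (Hratio D U p w) <= (q.+1%:R^-1)%:E)%E.
Proof.
move=> le_p no_chain; split; first by apply: limn_esup_ge0 => n; exact: Hratio_ge0.
apply: limn_esup_le; near=> n; apply: Hratio_le le_p _ _.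
- by near: n.
- by near: n; exists 1%N.
Unshelve. all: by end_near.
Qed.

Variable P : probability T R.
Hypothesis hail : hail_law P D U.

Lemma rare_event_negligible q : P.-negligible (lim_sup_set (rare_event q)).
Proof.
have [_ [mU _]] := hail.
have m_rare n : measurable (rare_event q n) by exact: measurable_black_chain_event.
exists (lim_sup_set (rare_event q)); split => //.
  apply: bigcapT_measurable => n; apply: bigcup_measurable => j _; exact: m_rare.
apply: lim_sup_set_cvg0 => //.
apply: (@le_lt_trans _ _ (\sum_(n <oo) (1 / (2 ^ (n + 1))%:R)%:E)%E).
  apply: lee_nneseries => [n _ _|n _]; first exact: measure_ge0.
  apply: le_trans (probability_black_chain_event hail _ _ _) _.
    by rewrite (ltW (threshold_gt0 _ _)) threshold_le1.
  by rewrite lee_fin addn1 chain_count_threshold_real.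
have geo := @cvg_geometric_eseries_half R 1 0.
by rewrite [X in (X < _)%E](cvg_lim _ geo) // expr0 divr1 ltry.
Qed.

End HailBounds.

Unset Implicit Arguments.

Theorem lemma7 (R : realType) (d : measure_display) (T : measurableType d)
  (P : probability T R) (D : node -> T -> bool) (U : node -> T -> R) :
  hail_law P D U ->
  {ae P, forall w : T,
     (fun p : R => limn_esup (Hratio D U p w)) x @[x --> 0^'+] --> (0 : \bar R)}.
Proof.
move=> hail.
have null : P.-negligible (\bigcup_q lim_sup_set (rare_event U q)).
  by apply: negligible_bigcup => q; exact (rare_event_negligible hail q).
apply: negligibleS null => w /= not_cvg; apply: contrapT => good; apply: not_cvg.
apply: cvg_at_right0_squeeze => q.
have ev : \forall n \near \oo, ~ rare_event U q n w.
  by apply: not_lim_sup_set => w_bad; apply: good; exists q.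
near=> x; apply: limn_esup_Hratio_bounds ev.
by near: x; exact: nbhs_right_le (threshold_gt0 R q).
Unshelve. all: by end_near.
Qed.
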